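(* Let $\mathbb{F}$ be a finite field, let $n, r, s$ be positive integers, and let $A \in \mathbb{F}^{(r+s)n \times (r+s)n}$ be a totally-non-singular lower-triangular matrix. For $v \in \mathbb{F}^s$ let $v' \in \mathbb{F}^{r+s}$ be obtained by appending $r$ zeros to $v$, and for $x = (x_1,\dots,x_k) \in (\mathbb{F}^s)^k$ let $x' = (x'_1,\dots,x'_k) \in \mathbb{F}^{(r+s)k}$. Define $\mathsf{TC}^{(n)}_{A,(s,r)}\colon (\mathbb{F}^s)^{(\leq n)} \to (\mathbb{F}^{r+s})^{(\leq n)}$ by mapping $x \in (\mathbb{F}^s)^k$ ($k \leq n$) to $A^{((r+s)k)} x' \in \mathbb{F}^{(r+s)k}$, viewed as an element of $(\mathbb{F}^{r+s})^k$ by grouping consecutive blocks of $r+s$ coordinates. Then $\mathsf{TC}^{(n)}_{A,(s,r)}$ is an $n$-truncated MDS tree code with distance $\frac{r}{r+s}$.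
   Context: For an $m \times m$ matrix $A$ and $k \leq m$, $A^{(k)}$ denotes the top-left $k \times k$ submatrix of $A$; for index sets $I,J$, $A[I|J]$ is the submatrix with rows $I$ and columns $J$. A lower-triangular $A \in \mathbb{F}^{m \times m}$ is totally-non-singular if for every $1 \leq t \leq m$ and all $I = \{i_1 < \dots < i_t\}, J = \{j_1 < \dots < j_t\} \subseteq [m]$ with $i_u \geq j_u$ for all $u \in [t]$, the submatrix $A[I|J]$ is non-singular. An $n$-truncated tree code $\mathsf{TC}^{(n)}\colon \Sigma^{(\leq n)} \to \Gamma^{(\leq n)}$ maps each string of length $k \leq n$ over $\Sigma$ to a string of length $k$ over $\Gamma$ such that the $i$-th output symbol depends only on the first $i$ input symbols. For $x \neq x' \in \Sigma^k$, $\operatorname{split}(x,x')$ is the largest $t$ with $x_u = x'_u$ for all $u \leq t$; $\Delta$ is Hamming distance over $\Gamma$. Its distance is $\delta_{\mathsf{TC}^{(n)}} := \inf_{k \leq n,\, x \neq x' \in \Sigma^k} \frac{\Delta(\mathsf{TC}^{(n)}(x),\mathsf{TC}^{(n)}(x'))}{k - \operatorname{split}(x,x')}$. It is maximum-distance separable (MDS) if $\delta_{\mathsf{TC}^{(n)}} > 1 - \frac{\log|\Sigma|}{\log|\Gamma|}$. *)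

From HB Require Import structures.
From mathcomp Require Import all_boot all_order all_algebra.
From mathcomp Require Import boolp classical_sets reals exp.
Set Implicit Arguments. Unset Strict Implicit. Unset Printing Implicit Defensive.
Import Order.TTheory GRing.Theory Num.Theory.
Local Open Scope ring_scope.
Local Open Scope classical_set_scope.

Definition lower_triangular (F : fieldType) (m : nat) (A : 'M[F]_m) : Prop :=
  forall i j : 'I_m, (i < j)%N -> A i j = 0.

Definition totally_non_singular (F : fieldType) (m : nat) (A : 'M[F]_m) : Prop :=
  forall (t : nat) (f g : 'I_t -> 'I_m),
    (0 < t)%N ->
    (forall u v : 'I_t, (u < v)%N -> (f u < f v)%N) ->
    (forall u v : 'I_t, (u < v)%N -> (g u < g v)%N) ->
    (forall u : 'I_t, (g u <= f u)%N) ->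
    \det (mxsub f g A) != 0.

Definition is_truncated_tree_code (S G : eqType) (n : nat)
    (TC : seq S -> seq G) : Prop :=
  (forall x, (size x <= n)%N -> size (TC x) = size x) /\
  (forall x y (i : nat), (size x <= n)%N -> (size y <= n)%N ->
     (i < size x)%N -> (i < size y)%N ->
     take i.+1 x = take i.+1 y -> onth (TC x) i = onth (TC y) i).

Definition split_at (S : eqType) (x y : seq S) : nat :=
  (\max_(t < (size x).+1 | take t x == take t y) t)%N.

Definition hamming (G : eqType) (a b : seq G) : nat :=
  count (fun p => p.1 != p.2) (zip a b).

Definition tc_distance (R : realType) (S G : eqType) (n : nat)
    (TC : seq S -> seq G) : R :=
  inf [set d : R | exists x y : seq S,
        [/\ size x = size y, (size x <= n)%N, x != y &
            d = (hamming (TC x) (TC y))%:R / (size x - split_at x y)%:R]].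

Definition is_MDS (R : realType) (S G : finType) (n : nat)
    (TC : seq S -> seq G) : Prop :=
  1 - ln (#|S|%:R : R) / ln (#|G|%:R : R) < tc_distance R n TC.

(* entry of a matrix indexed by naturals (0 outside the range) *)
Definition mxnat (F : ringType) (m : nat) (A : 'M[F]_m) (i j : nat) : F :=
  match insub i, insub j with
  | Some i', Some j' => A i' j'
  | _, _ => 0
  end.

Definition rvnat (F : ringType) (m : nat) (v : 'rV[F]_m) (c : nat) : F :=
  if insub c is Some c' then v ord0 c' else 0.

(* j-th coordinate (0-based) of x' = (x'_1,...,x'_k) in F^{(r+s)k}, where
   v' = (v, 0,...,0) appends r zeros to v in F^s *)
Definition padded_coord (F : ringType) (s r : nat) (x : seq 'rV[F]_s)
    (j : nat) : F :=
  let b := (j %/ (r + s))%N in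
  let c := (j %% (r + s))%N in
  if (c < s)%N then rvnat (nth 0 x b) c else 0.

(* x |-> A^{((r+s)k)} x', grouped into k blocks of r+s coordinates *)
Definition TC_A (F : ringType) (n s r : nat) (A : 'M[F]_((r + s) * n))
    (x : seq 'rV[F]_s) : seq 'rV[F]_(r + s) :=
  let k := size x in
  [seq \row_(c < r + s)
      \sum_(j < (r + s) * k)
         mxnat A ((r + s) * i + c)%N j * padded_coord r x j
  | i <- iota 0 k].

From HB Require Import structures.
From mathcomp Require Import all_boot all_order all_algebra.
From mathcomp Require Import boolp classical_sets reals exp.
From mathcomp Require Import zify.
Set Implicit Arguments. Unset Strict Implicit. Unset Printing Implicit Defensive.
Import Order.TTheory GRing.Theory Num.Theory.

(* Let d = x' - y'; the two codewords differ by A d.  If x and y first differ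
   in block t = split(x, y), then d vanishes before some position j1 < (r+s)t + s,
   is nonzero at j1, and has at most s(k - t) nonzero entries.  Total
   non-singularity of the lower-triangular A gives: among the positions i >= j1
   of any prefix, fewer entries of A d vanish than d has nonzero entries;
   otherwise the first vanishing rows and the support columns of d interlace and
   cut out a singular admissible minor.  Hence fewer than s(k - t)/(r + s) of the
   output blocks t, ..., k - 1 vanish, and the Hamming distance exceeds
   r(k - t)/(r + s).  Since k - t <= n, every ratio is at least
   (rn + 1)/((r + s)n), so the infimum is strictly above
   r/(r + s) = 1 - log|F^s| / log|F^(r+s)|. *)

Lemma sum_ord_widen_vanishing (V : nmodType) n1 n2 (G : nat -> V) :
  n1 <= n2 -> (forall j, n1 <= j < n2 -> G j = 0%R) ->
  (\sum_(j < n2) G j = \sum_(j < n1) G j)%R.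
Proof.
move=> le12 G0; rewrite -!(big_mkord xpredT) (big_cat_nat (leq0n n1) le12) /=.
by rewrite [X in (_ + X)%R]big1_seq ?addr0 // => j /andP[_]; rewrite mem_index_iota => /G0.
Qed.

Lemma nth_filter_iota_leq (P : pred nat) p i u : i <= p ->
  u < count P (iota 0 p.+1) ->
  (nth 0 (filter P (iota 0 p.+1)) u <= i) = (u < count P (iota 0 i.+1)).
Proof.
move=> ip; have -> : iota 0 p.+1 = iota 0 i.+1 ++ iota i.+1 (p - i).
  by rewrite -iotaD; congr iota; lia.
rewrite filter_cat nth_cat size_filter count_cat => hu.
case: ifP => h.
  have : nth 0 (filter P (iota 0 i.+1)) u \in iota 0 i.+1.
    have := mem_nth 0 (_ : u < size (filter P (iota 0 i.+1))).
    by rewrite size_filter mem_filter => /(_ h)/andP[].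
  by rewrite mem_iota ltnS => /andP[_ ->].
have hu' : u - count P (iota 0 i.+1) < size (filter P (iota i.+1 (p - i))).
  by rewrite size_filter; move/negbT: h; lia.
have := mem_nth 0 hu'; rewrite mem_filter mem_iota => /andP[_ /andP[lti _]].
by apply/negbTE; rewrite -ltnNge.
Qed.

Lemma nth_filter_iota_ltn (P : pred nat) p u v : u < v < count P (iota 0 p.+1) ->
  nth 0 (filter P (iota 0 p.+1)) u < nth 0 (filter P (iota 0 p.+1)) v.
Proof.
have sorted_P : sorted ltn (filter P (iota 0 p.+1)).
  by apply: sorted_filter; [exact: ltn_trans | exact: iota_ltn_sorted].
case/andP=> uv vP; apply: (sorted_ltn_nth ltn_trans 0 sorted_P) => //;
  by rewrite inE size_filter // (ltn_trans uv vP).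
Qed.

Lemma nth_filter_iota_interlace (P Q : pred nat) p u :
  (forall i, i < p -> P i -> count P (iota 0 i.+1) <= count Q (iota 0 i.+1)) ->
  u < count P (iota 0 p.+1) -> u < count Q (iota 0 p.+1) ->
  nth 0 (filter Q (iota 0 p.+1)) u <= nth 0 (filter P (iota 0 p.+1)) u.
Proof.
move=> PQ uP uQ; set i := nth 0 (filter P _) u.
have : i \in filter P (iota 0 p.+1) by apply: mem_nth; rewrite size_filter.
rewrite mem_filter mem_iota ltnS => /andP[Pi /andP[_ ip]].
have uPi : u < count P (iota 0 i.+1) by rewrite -(nth_filter_iota_leq ip uP).
rewrite (nth_filter_iota_leq ip uQ).
have [-> //|ltip] := eqVneq i p.
by apply: leq_trans uPi (PQ i _ Pi); rewrite ltn_neqAle ltip.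
Qed.

Lemma sub_in_count (T : eqType) (a1 a2 : pred T) (s : seq T) :
  {in s, subpred a1 a2} -> count a1 s <= count a2 s.
Proof.
move=> sub12; rewrite (@eq_in_count _ a1 (predI a1 a2)); first by apply: sub_count => x /andP[].
by move=> x /sub12 a12 /=; case: (a1 x) a12 => // ->.
Qed.

Lemma count_iota_suffix (P : pred nat) a b : a <= b ->
  count P (iota a (b - a)) <= count P (iota 0 b).
Proof. by move=> ab; rewrite -{2}(subnKC ab) iotaD count_cat leq_addl. Qed.

Definition block_all (P : pred nat) (N B : nat) : bool := all P (iota (N * B) N).

Lemma count_block_all_leq (P : pred nat) N a b :
  N * count (block_all P N) (iota a b) <= count P (iota (N * a) (N * b)).
Proof.
elim: b a => [|b IH] a /=; first by rewrite muln0.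
rewrite mulnS iotaD count_cat mulnDr -mulnSr; apply: leq_add (IH a.+1).
case: (boolP (block_all P N a)) => [|_]; last by rewrite muln0.
by rewrite /block_all all_count size_iota muln1 => /eqP ->.
Qed.

Lemma count_iota_blocks_leq (P : pred nat) N s' a b : s' <= N ->
  (forall q, s' <= q %% N -> ~~ P q) -> count P (iota (N * a) (N * b)) <= s' * b.
Proof.
move=> sN Poff; elim: b a => [|b IH] a; first by rewrite !muln0.
rewrite mulnS iotaD count_cat mulnS -mulnSr; apply: leq_add (IH a.+1).
have -> : iota (N * a) N = iota (N * a) s' ++ iota (N * a + s') (N - s').
  by rewrite -iotaD subnKC.
rewrite count_cat [X in _ + X](@eq_in_count _ _ pred0) ?count_pred0 ?addn0.
  by apply: leq_trans (count_size _ _) _; rewrite size_iota.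
move=> q; rewrite mem_iota => /andP[lo hi]; apply/negbTE/Poff.
have -> : q = a * N + (q - N * a) by lia.
by rewrite modnMDl modn_small; lia.
Qed.

Lemma split_at_spec (S : eqType) (x y : seq S) : size x = size y -> x != y ->
  [/\ take (split_at x y) x = take (split_at x y) y, split_at x y < size x &
      forall x0, nth x0 x (split_at x y) != nth x0 y (split_at x y)].
Proof.
move=> sz neq; rewrite /split_at.
have P0 : (fun t : 'I_(size x).+1 => take t x == take t y) ord0 by rewrite /= !take0.
rewrite (bigop.bigmax_eq_arg _ P0); case: arg_maxnP => // t /eqP xy t_max.
have t_lt : t < size x.
  rewrite ltn_neqAle -ltnS ltn_ord andbT; apply: contra neq => /eqP t_sz.
  by rewrite -(take_size x) -(take_size y) -sz -t_sz xy.
split=> // x0; apply/negP => /eqP xy_t.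
pose t1 : 'I_(size x).+1 := Ordinal (t_lt : t.+1 < (size x).+1).
have /t_max : take t1 x == take t1 y.
  by rewrite /= (take_nth x0 t_lt) (take_nth x0 (_ : t < size y)) -?sz // xy xy_t.
by rewrite /= ltnn.
Qed.

Local Open Scope ring_scope.

Section NatIndexedMatrix.

Variables (F : fieldType) (m : nat) (a : nat -> nat -> F).

Definition lower_triangular_nat := forall i j, (i < j)%N -> a i j = 0.

Definition totally_non_singular_nat :=
  forall (w : nat) (f g : nat -> nat), (0 < w)%N ->
    (forall u v, (u < v < w)%N -> (f u < f v)%N) ->
    (forall u v, (u < v < w)%N -> (g u < g v)%N) ->
    (forall u, (u < w)%N -> (f u < m)%N) ->
    (forall u, (u < w)%N -> (g u <= f u)%N) ->
    \det (\matrix_(u < w, v < w) a (f u) (g v)) != 0.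

Definition mulvec_nat (d : nat -> F) (i : nat) : F := \sum_(j < m) a i j * d j.

Hypotheses (lower_a : lower_triangular_nat) (tns_a : totally_non_singular_nat).

Variable d : nat -> F.

Lemma mulvec_nat_filter i p : (i <= p < m)%N ->
  mulvec_nat d i = \sum_(j <- filter (fun j => d j != 0) (iota 0%N p.+1)) a i j * d j.
Proof.
move=> /andP[ip pm]; rewrite /mulvec_nat.
rewrite (@sum_ord_widen_vanishing _ p.+1 m (fun j => a i j * d j)) //; last first.
  by move=> j /andP[pj _]; rewrite lower_a ?mul0r //; apply: leq_trans pj.
rewrite -(big_mkord xpredT (fun j => a i j * d j)) big_filter /index_iota subn0.
rewrite (bigID (fun j => d j != 0)) /=.
by rewrite [X in _ + X]big1 ?addr0 // => j /negPn/eqP ->; rewrite mulr0.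
Qed.

Lemma mulvec_nat_first j1 : (j1 < m)%N -> (forall j, (j < j1)%N -> d j = 0) ->
  mulvec_nat d j1 = a j1 j1 * d j1.
Proof.
move=> j1m d_lt; rewrite /mulvec_nat.
rewrite (@sum_ord_widen_vanishing _ j1.+1 m (fun j => a j1 j * d j)) //; last first.
  by move=> j /andP[j1j _]; rewrite lower_a ?mul0r.
by rewrite big_ord_recr /= big1 ?add0r // => j _; rewrite d_lt ?mulr0.
Qed.

Lemma diag_nat_neq0 i : (i < m)%N -> a i i != 0.
Proof.
move=> im; have := @tns_a 1 (fun=> i) (fun=> i) isT; rewrite det_mx11 mxE.
by apply=> // u v; lia.
Qed.

Lemma count_vanishing_lt_support j1 : d j1 != 0 -> (forall j, (j < j1)%N -> d j = 0) ->
  forall p, (j1 <= p < m)%N ->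
  (count (fun i => (j1 <= i)%N && (mulvec_nat d i == 0%R)) (iota 0 p.+1)
   < count (fun j => d j != 0%R) (iota 0 p.+1))%N.
Proof.
move=> dj1 d_lt p; elim/ltn_ind: p => p IH /andP[j1p pm].
set P := fun i => _; set Q := fun j => _.
set zs := filter P (iota 0%N p.+1); set js := filter Q (iota 0%N p.+1).
rewrite ltnNge; apply/negP => QleP.
(* The first vanishing rows [zs] interlace with the support [js] of [d], and [d]
   restricted to [js] is a nonzero kernel vector of the minor they cut out. *)
have js_zs : (size js <= size zs)%N by rewrite !size_filter.
have w0 : (0 < size js)%N.
  by rewrite size_filter -has_count; apply/hasP; exists j1; rewrite ?mem_iota.
have zsP u : (u < size js)%N ->
    [/\ (nth 0%N zs u <= p)%N, (j1 <= nth 0%N zs u)%N & mulvec_nat d (nth 0%N zs u) = 0].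
  move=> uw; have : nth 0%N zs u \in zs by apply: mem_nth; apply: leq_trans js_zs.
  by rewrite mem_filter mem_iota ltnS => /andP[/andP[-> /eqP ->] /andP[_ ->]].
have js_support u : (u < size js)%N -> d (nth 0%N js u) != 0.
  by move=> uw; have := mem_nth 0%N uw; rewrite mem_filter => /andP[].
have zs_incr u v : (u < v < size js)%N -> (nth 0%N zs u < nth 0%N zs v)%N.
  by case/andP=> uv vw; apply: nth_filter_iota_ltn; rewrite uv -size_filter (leq_trans vw).
have js_incr u v : (u < v < size js)%N -> (nth 0%N js u < nth 0%N js v)%N.
  by move=> uvw; apply: nth_filter_iota_ltn; rewrite -size_filter.
have zs_m u : (u < size js)%N -> (nth 0%N zs u < m)%N.
  by case/zsP=> zp _ _; apply: leq_ltn_trans pm.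
have interlace u : (u < size js)%N -> (nth 0%N js u <= nth 0%N zs u)%N.
  move=> uw; apply: nth_filter_iota_interlace; rewrite -?size_filter //.
    move=> i ip /andP[j1i _]; apply: ltnW; apply: IH => //.
    by rewrite j1i (ltn_trans ip pm).
  exact: leq_trans uw js_zs.
move: (tns_a w0 zs_incr js_incr zs_m interlace) => /negP; apply.
rewrite -det_tr; apply/det0P; exists (\row_v d (nth 0%N js v)).
  by apply/eqP => /rowP/(_ (Ordinal w0)); rewrite !mxE; apply/eqP/js_support.
apply/rowP => u; rewrite !mxE; have [zp _ zu] := zsP u (ltn_ord u).
rewrite -[RHS]zu (@mulvec_nat_filter _ p) ?zp // (big_nth 0%N) big_mkord.
by apply: eq_bigr => v _; rewrite !mxE mulrC.
Qed.

End NatIndexedMatrix.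

Section Padding.

Variables (F : nzRingType) (s r : nat) (x y : seq 'rV[F]_s).

Definition padded_diff (j : nat) : F := padded_coord r x j - padded_coord r y j.

Lemma padded_diff_pad q : (s <= q %% (r + s))%N -> padded_diff q = 0.
Proof. by move=> sq; rewrite /padded_diff /padded_coord ltnNge sq subrr. Qed.

Lemma padded_diff_prefix t j : take t x = take t y -> (j < (r + s) * t)%N ->
  padded_diff j = 0.
Proof.
move=> xy jt; have N0 : (0 < r + s)%N by rewrite lt0n; apply: contraTneq jt => ->; rewrite mul0n.
have jt' : (j %/ (r + s) < t)%N by rewrite ltn_divLR // mulnC.
by rewrite /padded_diff /padded_coord -(nth_take 0 jt' x) xy nth_take ?subrr.
Qed.

Lemma padded_diff_block t : nth 0 x t != nth 0 y t ->
  exists2 c, (c < s)%N & padded_diff ((r + s) * t + c) != 0.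
Proof.
move=> xy_t; have /existsP[c xy_tc] : [exists c : 'I_s, nth 0 x t ord0 c != nth 0 y t ord0 c].
  by apply: contraR xy_t => /existsPn xy_tc; apply/eqP/rowP => c; apply/eqP/negPn/xy_tc.
have c_rs : (c < r + s)%N by apply: leq_trans (ltn_ord c) (leq_addl r s).
have N0 : (0 < r + s)%N by apply: leq_ltn_trans c_rs.
exists c => //; rewrite /padded_diff /padded_coord mulnC divnMDl // modnMDl.
by rewrite divn_small // modn_small // addn0 ltn_ord /rvnat valK subr_eq0.
Qed.

Lemma padded_diff_first_support t : take t x = take t y -> nth 0 x t != nth 0 y t ->
  exists j1, [/\ ((r + s) * t <= j1 < (r + s) * t + s)%N, padded_diff j1 != 0
               & forall j, (j < j1)%N -> padded_diff j = 0].
Proof.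
move=> xy xy_t; have [c cs dc] := padded_diff_block xy_t.
have [j1 dj1 j1_min] := ex_minnP (ex_intro (fun j => padded_diff j != 0) _ dc).
exists j1; split=> //.
  apply/andP; split; last by apply: leq_ltn_trans (j1_min _ dc) _; rewrite ltn_add2l.
  by rewrite leqNgt; apply: contra dj1 => /(padded_diff_prefix xy)/eqP.
by move=> j jj1; apply/eqP; apply: contraTT jj1 => /j1_min; rewrite -leqNgt.
Qed.

Lemma count_padded_diff_support t : take t x = take t y -> (t <= size x)%N ->
  (count (fun j => padded_diff j != 0%R) (iota 0 ((r + s) * size x)) <= s * (size x - t))%N.
Proof.
move=> xy tx; rewrite -{1}(subnKC tx) mulnDr iotaD count_cat add0n.
rewrite (@eq_in_count _ _ pred0) ?count_pred0 ?add0n.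
  apply: count_iota_blocks_leq => [|q /padded_diff_pad ->]; [exact: leq_addl | by rewrite eqxx].
by move=> j; rewrite mem_iota => /andP[_ /(padded_diff_prefix xy) ->]; rewrite eqxx.
Qed.

End Padding.

Lemma mxnat_ord (F : nzRingType) m (A : 'M[F]_m) (i j : 'I_m) : mxnat A i j = A i j.
Proof. by rewrite /mxnat !valK. Qed.

Lemma lower_triangular_mxnat (F : fieldType) m (A : 'M[F]_m) :
  lower_triangular A -> lower_triangular_nat (mxnat A).
Proof.
move=> lowA i j ij; rewrite /mxnat.
case: insubP => [i' _ ei|//]; case: insubP => [j' _ ej|//].
by apply: lowA; rewrite ei ej.
Qed.

Lemma totally_non_singular_mxnat (F : fieldType) m (A : 'M[F]_m) :
  totally_non_singular A -> totally_non_singular_nat m (mxnat A).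
Proof.
move=> tnsA w f g w0 f_incr g_incr f_m gf.
have g_m u : (u < w)%N -> (g u < m)%N by move=> uw; apply: leq_ltn_trans (gf u uw) (f_m u uw).
pose f' (u : 'I_w) : 'I_m := Ordinal (f_m u (ltn_ord u)).
pose g' (u : 'I_w) : 'I_m := Ordinal (g_m u (ltn_ord u)).
have -> : \matrix_(u < w, v < w) mxnat A (f u) (g v) = mxsub f' g' A.
  by apply/matrixP => u v; rewrite !mxE -[f u]/(val (f' u)) -[g v]/(val (g' v)) mxnat_ord.
apply: tnsA => // [u v uv|u v uv|u]; rewrite ?f_incr ?g_incr ?gf //; exact/andP.
Qed.

Section TreeCode.

Variables (F : fieldType) (n s r : nat) (A : 'M[F]_((r + s) * n)).
Hypothesis lower_A : lower_triangular A.

Definition TC_row (x : seq 'rV[F]_s) (i : nat) : 'rV[F]_(r + s) :=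
  \row_(c < r + s) \sum_(j < (r + s) * size x)
     mxnat A ((r + s) * i + c)%N j * padded_coord r x j.

Lemma TC_AE x : TC_A A x = map (TC_row x) (iota 0 (size x)).
Proof. by []. Qed.

Lemma onth_TC_A x i : (i < size x)%N -> onth (TC_A A x) i = Some (TC_row x i).
Proof. by move=> ix; rewrite TC_AE onth_map onthE (nth_map 0%N) ?size_iota ?nth_iota. Qed.

Lemma TC_row_prefix x y i : (i < size x)%N -> (i < size y)%N ->
  take i.+1 x = take i.+1 y -> TC_row x i = TC_row y i.
Proof.
move=> ix iy xy; apply/rowP => c; rewrite !mxE.
have N0 : (0 < r + s)%N by apply: leq_ltn_trans (ltn_ord c).
have narrow z : (i < size z)%N ->
    \sum_(j < (r + s) * size z) mxnat A ((r + s) * i + c)%N j * padded_coord r z j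
  = \sum_(j < (r + s) * i.+1) mxnat A ((r + s) * i + c)%N j * padded_coord r z j.
  move=> iz; apply: (@sum_ord_widen_vanishing _ _ _ (fun j => _ * padded_coord r z j)).
    by rewrite leq_mul2l iz orbT.
  move=> j /andP[ij _]; rewrite lower_triangular_mxnat ?mul0r //.
  by apply: leq_trans ij; rewrite mulnS addnC ltn_add2r.
rewrite !narrow //; apply: eq_bigr => j _; congr (_ * _).
have ji : (j %/ (r + s) < i.+1)%N by rewrite ltn_divLR // (mulnC i.+1).
by rewrite /padded_coord -(nth_take 0 ji x) xy nth_take.
Qed.

Lemma TC_A_tree_code : is_truncated_tree_code n (TC_A A).
Proof.
split=> [x _|x y i _ _ ix iy xy]; first by rewrite size_map size_iota.
by rewrite !onth_TC_A // (TC_row_prefix ix iy xy).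
Qed.

Definition TC_diff (x y : seq 'rV[F]_s) : nat -> F :=
  mulvec_nat ((r + s) * n) (mxnat A) (padded_diff r x y).

Lemma TC_row_sub x y i : size x = size y -> (size x <= n)%N -> (i < size x)%N ->
  TC_row x i - TC_row y i = \row_(c < r + s) TC_diff x y ((r + s) * i + c).
Proof.
move=> xy xn ix; apply/rowP => c; rewrite !mxE -xy -sumrB /TC_diff /mulvec_nat.
rewrite (@sum_ord_widen_vanishing _ ((r + s) * size x) _
           (fun j => mxnat A ((r + s) * i + c)%N j * padded_diff r x y j)).
- by apply: eq_bigr => j _; rewrite mulrBr.
- by rewrite leq_mul2l xn orbT.
move=> j /andP[kj _]; rewrite lower_triangular_mxnat ?mul0r //; apply: leq_trans kj.
by have := ltn_ord c; have := leq_mul (leqnn (r + s)) ix; rewrite mulnS; lia.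
Qed.

Lemma hamming_TC_A x y : size x = size y -> (size x <= n)%N ->
  hamming (TC_A A x) (TC_A A y) =
  count (predC (block_all (fun q => TC_diff x y q == 0) (r + s))) (iota 0 (size x)).
Proof.
move=> xy xn; rewrite /hamming !TC_AE -xy zip_map count_map.
apply: eq_in_count => i; rewrite mem_iota /= => ix.
rewrite -subr_eq0 TC_row_sub //; congr negb; apply/eqP/allP => [/rowP d0 q|d0].
  rewrite mem_iota => /andP[lo hi]; have qc : (q - (r + s) * i < r + s)%N by lia.
  by have := d0 (Ordinal qc); rewrite !mxE /= subnKC // => ->.
by apply/rowP => c; rewrite !mxE; apply/eqP/d0; rewrite mem_iota leq_addr ltn_add2l ltn_ord.
Qed.

Hypothesis tns_A : totally_non_singular A.

Lemma count_vanishing_blocks_lt x y : size x = size y -> (size x <= n)%N -> x != y ->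
  ((r + s) * count (block_all (fun q => TC_diff x y q == 0%R) (r + s))
                  (iota (split_at x y) (size x - split_at x y))
   < s * (size x - split_at x y))%N.
Proof.
move=> xy xn neq; have [take_xy t_lt nth_neq] := split_at_spec xy neq.
set t := split_at x y in take_xy t_lt nth_neq *; set k := size x in xn t_lt *.
have [j1 [/andP[t_j1 j1_t] dj1 d_lt]] := padded_diff_first_support r take_xy (nth_neq 0).
set d := padded_diff r x y in dj1 d_lt; set o := TC_diff x y.
have tk : ((r + s) * t.+1 <= (r + s) * k)%N by rewrite leq_mul2l t_lt orbT.
have kn : ((r + s) * k <= (r + s) * n)%N by rewrite leq_mul2l xn orbT.
have j1_k : (j1 < (r + s) * k)%N by apply: leq_trans tk; rewrite mulnS; lia.
have lower_A' := lower_triangular_mxnat lower_A.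
have tns_A' := totally_non_singular_mxnat tns_A.
have not_vanishing_t : ~~ block_all (fun q => o q == 0) (r + s) t.
  have o_j1 : o j1 != 0.
    rewrite /o /TC_diff mulvec_nat_first //; last exact: leq_trans kn.
    by rewrite mulf_neq0 // (diag_nat_neq0 tns_A') //; exact: leq_trans kn.
  by apply: contra o_j1 => /allP; apply; rewrite mem_iota t_j1 /=; lia.
set P := fun q => (j1 <= q)%N && (o q == 0).
have vanishing_lt : (count P (iota 0 ((r + s) * k))
                     < count (fun j => d j != 0%R) (iota 0 ((r + s) * k)))%N.
  have := count_vanishing_lt_support lower_A' tns_A' dj1 d_lt (p := ((r + s) * k).-1).
  by rewrite prednK; [apply; apply/andP; split; lia | lia].
have blocks_le : ((r + s) * count (block_all (fun q => o q == 0%R) (r + s)) (iota t (k - t))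
                  <= count P (iota 0 ((r + s) * k)))%N.
  apply: leq_trans (count_iota_suffix P (leq_mul (leqnn (r + s)) (ltnW t_lt))).
  rewrite -mulnBr; apply: leq_trans (count_block_all_leq P (r + s) t (k - t)).
  rewrite leq_mul2l; apply/orP; right.
  apply: sub_in_count => B; rewrite mem_iota => /andP[tB _] ZB.
  have tB' : (t < B)%N by rewrite ltn_neqAle tB andbT; apply: contraNneq not_vanishing_t => ->.
  apply/allP => q qB; rewrite /P (allP ZB q qB) andbT.
  move: qB; rewrite mem_iota => /andP[Bq _].
  by have := leq_mul (leqnn (r + s)) tB'; rewrite mulnS; lia.
exact: leq_trans (leq_ltn_trans blocks_le vanishing_lt)
                 (count_padded_diff_support r take_xy (ltnW t_lt)).
Qed.

Lemma hamming_TC_A_gt x y : size x = size y -> (size x <= n)%N -> x != y ->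
  (r * (size x - split_at x y) < (r + s) * hamming (TC_A A x) (TC_A A y))%N.
Proof.
move=> xy xn neq; have few_vanishing := count_vanishing_blocks_lt xy xn neq.
have [_ t_lt _] := split_at_spec xy neq.
rewrite hamming_TC_A //; set Z := block_all _ _ in few_vanishing *.
set t := split_at x y in t_lt few_vanishing *.
apply: leq_trans (leq_mul (leqnn (r + s)) (count_iota_suffix (predC Z) (ltnW t_lt))).
have := count_predC Z (iota t (size x - t)); rewrite size_iota => /(congr1 (muln (r + s))).
rewrite mulnDr => split_L.
rewrite -(ltn_add2l ((r + s) * count Z (iota t (size x - t)))) split_L.
rewrite [((r + s) * (size x - t))%N]mulnDl.
by rewrite [X in (X < _)%N]addnC ltn_add2l.
Qed.

End TreeCode.

Lemma tc_distance_gt (R : realType) (S G : eqType) n (TC : seq S -> seq G)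
    (a b : nat) (s0 s1 : S) :
  (0 < n)%N -> (0 < b)%N -> s0 != s1 ->
  (forall x y, size x = size y -> (size x <= n)%N -> x != y ->
     (a * (size x - split_at x y) < b * hamming (TC x) (TC y))%N) ->
  a%:R / b%:R < tc_distance R n TC.
Proof.
move=> n0 b0 s01 hamming_gt; have bn0 : (0 : R) < (b * n)%:R by rewrite ltr0n muln_gt0 b0.
apply: (@lt_le_trans _ _ ((a * n).+1%:R / (b * n)%:R)).
  rewrite ltr_pdivlMr // natrM mulrA divfK ?pnatr_eq0 -?lt0n //.
  by rewrite -natrM ltr_nat.
apply: lb_le_inf.
  by eexists; exists [:: s0], [:: s1]; split; rewrite // eqseq_cons (negbTE s01).
move=> _ [x [y [xy xn neq ->]]]; have [_ t_lt _] := split_at_spec xy neq.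
have := hamming_gt x y xy xn neq; move: (hamming _ _) => h.
have L0 : (0 : R) < (size x - split_at x y)%:R by rewrite ltr0n subn_gt0.
rewrite ler_pdivlMr // mulrAC ler_pdivrMr // -!natrM ler_nat.
have := leq_subr (split_at x y) (size x); move: (size x - _)%N => L Lx.
move=> aL_bh; apply: (@leq_trans ((a * L).+1 * n)).
  by rewrite !mulSn mulnAC leq_add2r (leq_trans Lx xn).
by rewrite mulnA leq_mul2r (mulnC h) aL_bh orbT.
Qed.

Lemma one_sub_ln_ratio (R : realType) (q : R) (s r : nat) : 1 < q -> (0 < r + s)%N ->
  1 - ln (q ^+ s) / ln (q ^+ (r + s)) = r%:R / (r + s)%:R.
Proof.
move=> q1 rs0; have lnq : ln q != 0 by rewrite gt_eqF // ln_gt0.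
have rs : (r + s)%:R != 0 :> R by rewrite pnatr_eq0 -lt0n.
rewrite !lnXn ?(lt_trans ltr01 q1) // -!(mulr_natr (ln q)) invfM mulrACA mulfV // mul1r.
by apply: (mulIf rs); rewrite mulrBl !divfK // mul1r natrD addrK.
Qed.

Theorem theorem2p6 (R : realType) (F : finFieldType) (n r s : nat)
    (A : 'M[F]_((r + s) * n)) :
  (0 < n)%N -> (0 < r)%N -> (0 < s)%N ->
  lower_triangular A -> totally_non_singular A ->
  [/\ is_truncated_tree_code n (@TC_A F n s r A),
      is_MDS R n (@TC_A F n s r A) &
      (r%:R / (r + s)%:R : R) < tc_distance R n (@TC_A F n s r A)].
Proof.
move=> n0 _ s0 lower_A tns_A.
have rs0 : (0 < r + s)%N by rewrite addn_gt0 s0 orbT.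
have s01 : (0 : 'rV[F]_s) != const_mx 1.
  by apply/eqP => /rowP/(_ (Ordinal s0)); rewrite !mxE => /eqP; rewrite eq_sym oner_eq0.
have dist := tc_distance_gt R n0 rs0 s01 (hamming_TC_A_gt lower_A tns_A).
split=> //; first exact: TC_A_tree_code.
have F1 : (1 : R) < #|F|%:R by rewrite ltr1n card_finNzRing_gt1.
by rewrite /is_MDS !card_mx !mul1n !natrX one_sub_ln_ratio.
Qed.
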